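(* Let $n,q_1,\ldots,q_n\in\mathbb{N}$ and let $(\mathfrak{X}_1,\ldots,\mathfrak{X}_n)$ and $(\mathfrak{Y}_1,\ldots,\mathfrak{Y}_n)$ be random vectors supported on $\mathcal{S}_{++}^{q_1}\times\cdots\times\mathcal{S}_{++}^{q_n}$. Then $(\mathfrak{X}_1,\ldots,\mathfrak{X}_n)\preceq_{\mathrm{Lt}}(\mathfrak{Y}_1,\ldots,\mathfrak{Y}_n)$ if and only if \[\mathbb{E}\Big\{\prod_{i=1}^n\phi_i(\mathfrak{X}_i)\Big\}\ge\mathbb{E}\Big\{\prod_{i=1}^n\phi_i(\mathfrak{Y}_i)\Big\}\] for all matrix-variate completely monotone functions $\phi_i:\mathcal{S}_{++}^{q_i}\to[0,\infty)$, $i\in\{1,\ldots,n\}$, whenever the expectations are finite.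
   Context: $\mathcal{S}_+^q$, $\mathcal{S}_{++}^q$ denote the symmetric nonnegative definite and positive definite real $q\times q$ matrices; $\mathrm{etr}(\cdot)=\exp\{\mathrm{tr}(\cdot)\}$. A map $\phi:\mathcal{S}_{++}^q\to[0,\infty)$ is matrix-variate completely monotone if there is a measure $\mu$ on $\mathcal{S}_+^q$ with $\phi(T)=\int_{\mathcal{S}_+^q}\mathrm{etr}(-TX)\,\mu(\mathrm{d}X)$ for all $T\in\mathcal{S}_{++}^q$. For random vectors of matrices $(\mathfrak{X}_1,\ldots,\mathfrak{X}_n)$, $(\mathfrak{Y}_1,\ldots,\mathfrak{Y}_n)$ on $\mathcal{S}_+^{q_1}\times\cdots\times\mathcal{S}_+^{q_n}$, one writes $(\mathfrak{X}_1,\ldots,\mathfrak{X}_n)\preceq_{\mathrm{Lt}}(\mathfrak{Y}_1,\ldots,\mathfrak{Y}_n)$ (matrix-variate Laplace transform order) if $\mathbb{E}\{\prod_{i=1}^n\mathrm{etr}(-T_i\mathfrak{X}_i)\}\ge\mathbb{E}\{\prod_{i=1}^n\mathrm{etr}(-T_i\mathfrak{Y}_i)\}$ for all $T_i\in\mathcal{S}_+^{q_i}$, $i\in\{1,\ldots,n\}$. *)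

From HB Require Import structures.
From mathcomp Require Import all_boot all_order all_algebra.
From mathcomp Require Import all_classical all_reals all_analysis.
Set Implicit Arguments. Unset Strict Implicit. Unset Printing Implicit Defensive.
Import Order.TTheory GRing.Theory Num.Theory.
Local Open Scope classical_set_scope.
Local Open Scope ring_scope.

(* Real q x q matrices, with the Borel sigma-algebra
   (generated by the entry maps M |-> M i j, i.e. the product = Borel
   sigma-algebra on R^(q x q)). *)
Definition smx (R : realType) (q : nat) : Type := 'M[R]_q.
HB.instance Definition _ (R : realType) (q : nat) := Choice.on (smx R q).
HB.instance Definition _ (R : realType) (q : nat) :=
  @isPointed.Build (smx R q) (0 : 'M[R]_q).

Definition mx_entry_sets (R : realType) (q : nat) : set (set (smx R q)) :=
  [set A | exists (i j : 'I_q) (B : set R),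
      measurable B /\ A = (fun M : 'M[R]_q => M i j) @^-1` B].

HB.instance Definition _ (R : realType) (q : nat) :=
  Measurable.copy (smx R q) (g_sigma_algebraType (@mx_entry_sets R q)).

Definition sym_mx (R : realType) (q : nat) (A : 'M[R]_q) : Prop := A^T = A.

Definition psd (R : realType) (q : nat) : set 'M[R]_q :=
  [set A | sym_mx A /\ forall v : 'cV[R]_q, 0 <= (v^T *m A *m v) 0 0].

Definition pd (R : realType) (q : nat) : set 'M[R]_q :=
  [set A | sym_mx A /\ forall v : 'cV[R]_q, v != 0 -> 0 < (v^T *m A *m v) 0 0].

Definition etr (R : realType) (q : nat) (A : 'M[R]_q) : R := expR (\tr A).

(* matrix-variate complete monotonicity of phi : S_++^q -> [0, oo)
   (phi is given as a total function on matrices; only its values on S_++^q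
   matter): there is a measure mu on S_+^q (a measure on the matrix space,
   restricted to S_+^q) with phi(T) = int_{S_+^q} etr(-T X) mu(dX) for all
   T in S_++^q. *)
Definition mx_completely_monotone (R : realType) (q : nat) (phi : 'M[R]_q -> R) : Prop :=
  exists mu : {measure set (smx R q) -> \bar R},
    forall T : 'M[R]_q, pd T ->
      (phi T)%:E = (\int[mu]_(X in (psd (R := R) (q := q) : set (smx R q)))
                      (etr (- (T *m X)))%:E)%E.

Definition random_mx d (Omega : measurableType d) (R : realType) (q : nat)
    (X : Omega -> smx R q) : Prop := measurable_fun setT X.

Definition lt_order d (Omega : measurableType d) d' (Omega' : measurableType d')
    (R : realType) (P : probability Omega R) (P' : probability Omega' R)
    (n : nat) (q : 'I_n -> nat)
    (X : forall i : 'I_n, Omega -> 'M[R]_(q i))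
    (Y : forall i : 'I_n, Omega' -> 'M[R]_(q i)) : Prop :=
  forall T : forall i : 'I_n, 'M[R]_(q i), (forall i, psd (T i)) ->
    (\int[P']_w (\prod_(i < n) etr (- (T i *m Y i w)))%:E <=
     \int[P]_w (\prod_(i < n) etr (- (T i *m X i w)))%:E)%E.

From HB Require Import structures.
From mathcomp Require Import all_boot all_order all_algebra.
From mathcomp Require Import all_classical all_reals all_analysis.
From mathcomp Require Import ring lra measurable_realfun.
Import Order.TTheory GRing.Theory Num.Theory numFieldNormedType.Exports.
Set Implicit Arguments. Unset Strict Implicit. Unset Printing Implicit Defensive.
Local Open Scope classical_set_scope.
Local Open Scope ring_scope.

(* (<=) The Laplace kernels [S |-> etr (- (T S))], T psd, are completely monotone
   (represented by the Dirac mass at T) and bounded by 1, because tr (T S) >= 0 for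
   psd T and S.
   (=>) Replace the completely monotone factors one at a time by their
   representations phi_j (S) = \int_{S_+} etr (- (S X)) mu_j (dX).  By Tonelli the
   expectation of the product becomes an integral over X of the expectations in
   which phi_j is replaced by the kernel at X; once every factor is a kernel, the
   Laplace transform order applies under the integrals.  Tonelli needs mu_j
   restricted to S_+ to be sigma-finite, which follows from phi_j (I) < oo, and
   S_+ to be measurable, which reduces to countably many rational test vectors. *)

Section PsdMatrices.
Variables (R : realType) (q : nat).
Implicit Types (S T : 'M[R]_q) (u v w : 'cV[R]_q).

Definition bform S u w : R := (u^T *m S *m w) 0 0.

Lemma bformDl S u v w : bform S (u + v) w = bform S u w + bform S v w.
Proof. by rewrite /bform linearD /= !mulmxDl !mxE. Qed.

Lemma bformDr S u v w : bform S w (u + v) = bform S w u + bform S w v.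
Proof. by rewrite /bform mulmxDr !mxE. Qed.

Lemma bformZl S a u w : bform S (a *: u) w = a * bform S u w.
Proof. by rewrite /bform linearZ /= -!scalemxAl !mxE. Qed.

Lemma bformZr S a u w : bform S w (a *: u) = a * bform S w u.
Proof. by rewrite /bform -!scalemxAr !mxE. Qed.

Definition bformE := (bformDl, bformDr, bformZl, bformZr).

Lemma bform_delta S i j : bform S (delta_mx i 0) (delta_mx j 0) = S i j.
Proof. by rewrite /bform trmx_delta -rowE -colE !mxE. Qed.

Lemma bform_sym S u w : sym_mx S -> bform S u w = bform S w u.
Proof.
move=> sS; rewrite /bform -[in LHS](trmxK (u^T *m S *m w)) mxE.
by rewrite !trmx_mul sS trmxK mulmxA.
Qed.

Lemma sym_mx_entry S i j : sym_mx S -> S j i = S i j.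
Proof. by move=> sS; rewrite -[in LHS]sS mxE. Qed.

Lemma psd_diag_ge0 S j : psd S -> 0 <= S j j.
Proof. by move=> [_ pS]; have := pS (delta_mx j 0); rewrite -/(bform _ _ _) bform_delta. Qed.

Lemma psd_entry_eq0 S i j : psd S -> S j j = 0 -> S i j = 0.
Proof.
move=> [sS pS] Sjj; apply/eqP/negPn/negP => Sij.
(* as [S j j = 0], the form at [e_i + t e_j] is [S i i + 2 t S i j], which is [-1] here *)
set t := - (S i i + 1) / (2 * S i j).
have := pS (delta_mx i 0 + t *: delta_mx j 0).
rewrite -/(bform S _ _) !bformE !bform_delta Sjj (sym_mx_entry i j sS).
have -> : S i i + t * S i j + (t * S i j + t * (t * 0)) = -1 by rewrite /t; field.
by rewrite ler0N1.
Qed.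

Definition diag_support S : {set 'I_q} := [set a | S a a != 0]%SET.

Lemma psd_diag_support0 S : psd S -> #|diag_support S| = 0%N -> S = 0.
Proof.
move=> pS /card0_eq S0; apply/matrixP => i j; rewrite mxE; apply: (psd_entry_eq0 i pS).
by apply/eqP; have := S0 j; rewrite inE => /negbFE.
Qed.

Definition schur S j := S - (S j j)^-1 *: (col j S *m row j S).

Lemma schurE S j a b : schur S j a b = S a b - (S j j)^-1 * (S a j * S j b).
Proof. by rewrite /schur !mxE big_ord1 !mxE. Qed.

Lemma bform_schur S j v :
  bform (schur S j) v v =
  bform S v v - (S j j)^-1 * (bform S v (delta_mx j 0) * bform S (delta_mx j 0) v).
Proof.
rewrite /bform /schur mulmxBr mulmxBl -scalemxAr -scalemxAl colE (rowE j S).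
rewrite -[delta_mx 0 j]trmx_delta.
set e : 'cV_q := delta_mx j 0.
have -> : v^T *m (S *m e *m (e^T *m S)) *m v = (v^T *m S *m e) *m (e^T *m S *m v).
  by rewrite !mulmxA.
by rewrite [LHS]mxE [X in _ + X]mxE [X in - X]mxE [X in _ * X]mxE big_ord1.
Qed.

Lemma schur_psd S j : psd S -> 0 < S j j -> psd (schur S j).
Proof.
move=> [sS pS] Sj; split.
  apply/matrixP => a b; rewrite mxE !schurE (sym_mx_entry a b sS).
  by rewrite (sym_mx_entry j b sS) (sym_mx_entry a j sS) [S j b * _]mulrC.
move=> v; rewrite -/(bform _ _ _) bform_schur.
set e := delta_mx j 0; set beta := bform S v e.
(* [bform (schur S j) v v] is the value of the form at [v - (beta / S j j) e_j] *)
have := pS (v - (beta / S j j) *: e); rewrite -/(bform _ _ _).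
rewrite -scaleNr !bformE (bform_sym e v sS) -/beta bform_delta.
suff -> : bform S v v + - (beta / S j j) * beta +
    (- (beta / S j j) * beta + - (beta / S j j) * (- (beta / S j j) * S j j)) =
    bform S v v - (S j j)^-1 * (beta * beta) by [].
by field; rewrite gt_eqF.
Qed.

Lemma schur_diag_support S j : psd S -> 0 < S j j ->
  diag_support (schur S j) \proper diag_support S.
Proof.
move=> pS Sj; apply/properP; split.
  apply/fintype.subsetP => a; rewrite !inE schurE; apply: contraNneq => Sa.
  by rewrite Sa (psd_entry_eq0 j pS Sa) !mulr0 subrr.
exists j; first by rewrite inE gt_eqF.
by rewrite inE schurE mulKf ?subrr ?eqxx // gt_eqF.
Qed.

Lemma mxtrace_mul_schur T S j : sym_mx S ->
  \tr (T *m S) = \tr (T *m schur S j) + (S j j)^-1 * bform T (col j S) (col j S).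
Proof.
move=> sS; have trE : \tr (T *m (col j S *m row j S)) = bform T (col j S) (col j S).
  by rewrite mulmxA mxtrace_mulC /mxtrace big_ord1 /bform mulmxA tr_col sS.
by rewrite /schur mulmxBr -scalemxAr linearB /= mxtraceZ trE subrK.
Qed.

Lemma mxtrace_mul_psd_ge0 T S : psd T -> psd S -> 0 <= \tr (T *m S).
Proof.
move=> pT; move: {2}#|diag_support S| (leqnn #|diag_support S|) => m.
elim: m S => [|m IH] S le_supp pS.
  move: le_supp; rewrite leqn0 => /eqP/(psd_diag_support0 pS) ->.
  by rewrite mulmx0 mxtrace0.
have [/(psd_diag_support0 pS) ->|] := eqVneq #|diag_support S| 0%N.
  by rewrite mulmx0 mxtrace0.
rewrite -lt0n => /card_gt0P[j]; rewrite inE => Sj.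
have {}Sj : 0 < S j j by rewrite lt_def Sj psd_diag_ge0.
rewrite (mxtrace_mul_schur _ j pS.1) addr_ge0 //.
  apply: IH (schur_psd pS Sj); rewrite -ltnS.
  exact: leq_trans (proper_card (schur_diag_support pS Sj)) le_supp.
by apply: mulr_ge0; [rewrite invr_ge0 ltW | apply: pT.2].
Qed.

Lemma pd_psd S : pd S -> psd S.
Proof.
move=> [sS pS]; split => // v; have [->|v0] := eqVneq v 0.
  by rewrite mulmx0 mxE.
exact/ltW/pS.
Qed.

Lemma pd1 : pd (1%:M : 'M[R]_q).
Proof.
split=> [|v v0]; first by rewrite /sym_mx trmx1.
have [i vi] : exists i, v i 0 != 0.
  apply/not_existsP => v_eq0; move/eqP: v0; apply; apply/matrixP => i j.
  by rewrite (ord1 j) mxE; apply/eqP/negP => /negP; apply: v_eq0.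
rewrite mulmx1 mxE (bigD1 i) //= mxE; apply: ltr_wpDr.
  by apply: sumr_ge0 => j _; rewrite mxE; nra.
by move: vi; rewrite neq_lt => /orP[] ?; nra.
Qed.

End PsdMatrices.

Lemma ge0_continuous_rat (R : realType) (f : R -> R) :
  continuous f -> (forall r : rat, 0 <= f (ratr r)) -> forall x, 0 <= f x.
Proof.
move=> cf f0 x; rewrite leNgt; apply/negP => fx.
have [y [/= fy [r _ ry]]] : (f @^-1` [set y | y < 0]) `&` (ratr @` setT) !=set0.
  apply: dense_rat; first by exists x.
  by apply: open_comp; [move=> y _; exact: cf | exact: open_lt].
by move: fy; rewrite -ry ltNge f0.
Qed.

Section RationalVectors.
Variables (R : realType) (q : nat).

Lemma continuous_bform_line (A : 'M[R]_q) (w e : 'cV[R]_q) :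
  continuous (fun x : R => bform A (w + x *: e) (w + x *: e)).
Proof.
have -> : (fun x => bform A (w + x *: e) (w + x *: e)) =
    horner (bform A e e *: 'X^2 + (bform A w e + bform A e w) *: 'X + (bform A w w)%:P).
  by apply/funext => x; rewrite !hornerE /= !bformE; ring.
exact: continuous_horner.
Qed.

Lemma bform_ge0_rat (A : 'M[R]_q) :
  (forall u : 'cV[rat]_q, 0 <= bform A (map_mx ratr u) (map_mx ratr u)) ->
  forall v, 0 <= bform A v v.
Proof.
move=> Arat.
(* free the coordinates one at a time, by continuity along the line through [v] *)
suff rat_from k : (k <= q)%N -> forall v : 'cV[R]_q,
    (forall j : 'I_q, (k <= j)%N -> exists r : rat, v j 0 = ratr r) -> 0 <= bform A v v.
  by move=> v; apply: (rat_from q (leqnn q)) => j; rewrite leqNgt ltn_ord.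
elim: k => [_ v vrat | k IH kq v vrat].
  have [r rE] := choice (fun j => vrat j (leq0n j)).
  have -> : v = map_mx ratr (\col_j r j).
    by apply/matrixP => i j; rewrite (ord1 j) !mxE rE.
  exact: Arat.
set jk := Ordinal kq; set e : 'cV[R]_q := delta_mx jk 0.
set w := v - v jk 0 *: e; rewrite -[v](subrK (v jk 0 *: e)) -/w.
apply: ge0_continuous_rat (@continuous_bform_line A w e) _ _ => r.
apply: IH (ltnW kq) _ _ => j kj; rewrite /w !mxE eqxx andbT.
have [->|njk] := eqVneq j jk; first by exists r; rewrite !mulr1 subrr add0r.
rewrite !mulr0 subr0 addr0; apply: vrat.
by rewrite ltn_neqAle kj andbT; apply: contra_neq njk => kE; apply: val_inj.
Qed.

End RationalVectors.

Lemma measurable_preimageT d d' (T : measurableType d) (U : measurableType d')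
    (f : T -> U) (B : set U) :
  measurable_fun setT f -> measurable B -> measurable (f @^-1` B).
Proof. by move=> mf mB; rewrite -[X in measurable X]setTI; apply: mf. Qed.

Section EntrywiseMeasurable.
Variable R : realType.

Lemma measurable_entry q (i j : 'I_q) : measurable_fun setT (fun M : smx R q => M i j).
Proof. by move=> _ B mB; rewrite setTI; apply: sub_gen_smallest; exists i, j, B. Qed.

Definition entrywise_measurable d (T : measurableType d) m n (F : T -> 'M[R]_(m, n)) :=
  forall i j, measurable_fun setT (fun t => F t i j).

Variables (d : measure_display) (T : measurableType d).

Lemma measurable_entrywise q (Z : T -> smx R q) :
  measurable_fun setT Z -> entrywise_measurable Z.
Proof. by move=> mZ i j; apply: measurableT_comp (measurable_entry i j) mZ. Qed.

Lemma entrywise_measurable_cst m n (A : 'M[R]_(m, n)) :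
  entrywise_measurable (fun _ : T => A).
Proof. by move=> i j; apply: measurable_cst. Qed.

Lemma entrywise_measurable_mul m n p (F : T -> 'M[R]_(m, n)) (G : T -> 'M[R]_(n, p)) :
  entrywise_measurable F -> entrywise_measurable G ->
  entrywise_measurable (fun t => F t *m G t).
Proof.
move=> mF mG i j; under eq_fun do rewrite mxE.
by apply: measurable_sum => k; apply: measurable_funM.
Qed.

Lemma measurable_etrN q (F : T -> 'M[R]_q) :
  entrywise_measurable F -> measurable_fun setT (fun t => etr (- F t)).
Proof.
move=> mF; rewrite /etr; under eq_fun do rewrite linearN.
apply: measurableT_comp (@measurable_expR R) _; apply: measurable_funN.
by apply: measurable_sum => i; apply: mF.
Qed.

End EntrywiseMeasurable.

Lemma measurable_etrN_mull (R : realType) q (S : 'M[R]_q) :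
  measurable_fun setT (fun X : smx R q => etr (- (S *m X))).
Proof.
apply: measurable_etrN; apply: entrywise_measurable_mul.
  exact: entrywise_measurable_cst.
exact/measurable_entrywise/measurable_id.
Qed.

Local Notation psd_set R q := (@psd R q : set (smx R q)).

Lemma measurable_psd (R : realType) q : measurable (psd_set R q).
Proof.
have mbform (u : 'cV[R]_q) : measurable_fun setT (fun A : smx R q => bform A u u).
  have muA : entrywise_measurable (fun A : smx R q => u^T *m A).
    apply: entrywise_measurable_mul; first exact: entrywise_measurable_cst.
    exact/measurable_entrywise/measurable_id.
  exact: entrywise_measurable_mul muA (entrywise_measurable_cst u) 0 0.
have -> : psd_set R q =
    ~` (\bigcup_(ij : 'I_q * 'I_q)
          (fun A : smx R q => A ij.1 ij.2 - A ij.2 ij.1) @^-1` ~` [set 0]) `&`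
    ~` (\bigcup_(u : 'cV[rat]_q)
          (fun A : smx R q => bform A (map_mx ratr u) (map_mx ratr u)) @^-1` `]-oo, 0[).
  apply/seteqP; split => A.
    move=> [sA pA]; split => [[[i j] _ /=]|[u _ /=]]; last by rewrite in_itv /= ltNge pA.
    by rewrite (sym_mx_entry j i sA) subrr.
  move=> [sA pA]; split.
    apply/matrixP => i j; rewrite mxE; apply/eqP; rewrite -subr_eq0; apply/eqP.
    by apply: contrapT => Aij; apply: sA; exists (j, i).
  apply: bform_ge0_rat => u; rewrite leNgt; apply/negP => Au.
  by apply: pA; exists u => //=; rewrite in_itv.
apply: measurableI; apply: measurableC; apply: countable_bigcupT_measurable.
- exact: countableP.
- move=> [i j]; apply: measurable_preimageT.
    by apply: measurable_funB; apply: measurable_entry.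
  exact: measurableC (lebesgue_stieltjes_measure.measurable_set1 _).
- exact: countableP.
- by move=> u; apply: measurable_preimageT; [exact: mbform | exact: measurable_itv].
Qed.

Section PsdRestriction.
Variables (R : realType) (q : nat) (mu : {measure set smx R q -> \bar R}).
Local Open Scope ereal_scope.
Hypothesis mu_etr_finite : \int[mu]_(X in psd_set R q) (etr (- X))%:E < +oo.

Let measurable_etrN_smx : measurable_fun setT (fun X : smx R q => etr (- X)).
Proof. exact/measurable_etrN/measurable_entrywise/measurable_id. Qed.

Lemma sigma_finite_psd_restr : sigma_finite setT (mrestr mu (@measurable_psd R q)).
Proof.
have mtr : measurable_fun setT (fun X : smx R q => \tr X).
  by apply: measurable_sum => i; apply: measurable_entry.
pose B n := [set X : smx R q | \tr X <= n%:R]%R.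
have mB n : measurable (B n).
  rewrite (_ : B n = (fun X : smx R q => \tr X) @^-1` [set` `]-oo, n%:R]%R]).
    exact: measurable_preimageT mtr (measurable_itv _).
  by apply/seteqP; split => X /=; rewrite in_itv.
exists (fun n => ~` psd_set R q `|` B n).
  apply/seteqP; split => // X _.
  have [pX|npX] := pselect (psd_set R q X); last by exists 0%N => //; left.
  exists (Num.Def.archi_bound `|\tr X|)%R => //; right.
  exact/ltW/(le_lt_trans (ler_norm _) (archi_boundP _)).
move=> n; split.
  by apply: measurableU => //; apply: measurableC; exact: measurable_psd.
rewrite /mrestr setIUl setICl set0U setIC.
(* on [B n] the integrand [etr (- X)] is at least [expR (- n)] *)
have : (expR (- n%:R))%:E * mu (psd_set R q `&` B n) <=
    \int[mu]_(X in psd_set R q) (etr (- X))%:E.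
  have mpB : measurable (psd_set R q `&` B n).
    by apply: measurableI => //; exact: measurable_psd.
  rewrite -integral_cst //; apply: le_trans (ge0_subset_integral _ mpB _ _ _ _); last 4 first.
  - exact: measurable_psd.
  - apply/measurable_EFinP/measurable_funTS; exact: measurable_etrN_smx.
  - by move=> X _; rewrite lee_fin expR_ge0.
  - by move=> X [].
  apply: ge0_le_integral => //.
  - by move=> X _; rewrite lee_fin expR_ge0.
  - apply/measurable_EFinP/measurable_funTS; exact: measurable_etrN_smx.
  - by move=> X [_ trX]; rewrite lee_fin /etr linearN ler_expR lerN2.
move=> /le_lt_trans/(_ mu_etr_finite); apply: contraTT.
by rewrite -leNgt leye_eq => /eqP ->; rewrite muleC gt0_mulye ?lte_fin ?expR_gt0 // ltxx.
Qed.

Definition psd_restr : {sigma_finite_measure set smx R q -> \bar R} :=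
  HB.pack_for (SigmaFiniteMeasure.type (smx R q) R) (mrestr mu (@measurable_psd R q))
    (isSFinite.Build _ _ _ _ (sfinite_measure_sigma_finite sigma_finite_psd_restr))
    (isSigmaFinite.Build _ _ _ _ sigma_finite_psd_restr).

Lemma integral_psd_restr (f : smx R q -> \bar R) :
  \int[mu]_(X in psd_set R q) f X = \int[psd_restr]_X (f \_ (psd_set R q)) X.
Proof.
rewrite -integral_mkcond; apply: eq_measure_integral => A mA Apsd.
by rewrite /= /mrestr setIidl.
Qed.

Variables (d : measure_display) (Om : measurableType d) (Z : Om -> smx R q).
Hypothesis mZ : measurable_fun setT Z.

Let etr_integrand (g : Om -> R) (z : Om * smx R q) :=
  ((fun X => (g z.1 * etr (- (Z z.1 *m X)))%:E) \_ (psd_set R q)) z.2.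

Let measurable_etr_integrand g : measurable_fun setT g ->
  measurable_fun setT (etr_integrand g).
Proof.
move=> mg; rewrite (_ : etr_integrand g =
    EFin \o (fun z => g z.1 * etr (- (Z z.1 *m z.2)) * \1_(psd_set R q) z.2)%R).
  apply/measurable_EFinP; apply: measurable_funM; first apply: measurable_funM.
  - exact: measurableT_comp mg measurable_fst.
  - apply: measurable_etrN; apply: entrywise_measurable_mul.
      by apply: measurable_entrywise; exact: measurableT_comp mZ measurable_fst.
    by apply: measurable_entrywise; exact: measurable_snd.
  - by apply: measurableT_comp measurable_snd; apply: measurable_indic; exact: measurable_psd.
apply/funext => z; rewrite /etr_integrand patchE /= indicE.
by case: ifPn => _; rewrite ?mulr1 ?mulr0.
Qed.

Let etr_integrand_ge0 g : (forall w, 0 <= g w)%R -> forall z, 0 <= etr_integrand g z.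
Proof.
move=> g0 z; rewrite /etr_integrand patchE; case: ifPn => // _.
by rewrite lee_fin mulr_ge0 // expR_ge0.
Qed.

Lemma measurable_integral_etr :
  measurable_fun setT (fun w => \int[mu]_(X in psd_set R q) (etr (- (Z w *m X)))%:E).
Proof.
have := measurable_fun_fubini_tonelli_F (m2 := psd_restr) _
  (measurable_etr_integrand (measurable_cst (1 : R)%R)) (etr_integrand_ge0 (fun=> ler01)).
apply: eq_measurable_fun => w _; rewrite /fubini_F integral_psd_restr.
by apply: eq_integral => X _; rewrite /etr_integrand /= !patchE mul1r.
Qed.

Lemma fubini_integral_etr (P : {sigma_finite_measure set Om -> \bar R}) (g : Om -> R) :
  measurable_fun setT g -> (forall w, 0 <= g w)%R ->
  \int[P]_w \int[mu]_(X in psd_set R q) (g w * etr (- (Z w *m X)))%:E =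
  \int[mu]_(X in psd_set R q) \int[P]_w (g w * etr (- (Z w *m X)))%:E.
Proof.
move=> mg g0; under eq_integral => w _ do rewrite integral_psd_restr.
rewrite integral_psd_restr.
rewrite (fubini_tonelli _ (measurable_etr_integrand mg) (etr_integrand_ge0 g0)).
apply: eq_integral => X _; rewrite patchE; case: ifPn => Xpsd.
  by apply: eq_integral => w _; rewrite /etr_integrand patchE Xpsd.
by rewrite integral0_eq // => w _; rewrite /etr_integrand patchE (negbTE Xpsd).
Qed.

End PsdRestriction.

Section CompletelyMonotone.
Variables (R : realType) (q : nat) (phi : 'M[R]_q -> R).
Hypothesis phi_cm : mx_completely_monotone phi.
Local Open Scope ereal_scope.

Lemma cm_ge0 S : pd S -> (0 <= phi S)%R.
Proof.
move=> pS; have [mu phiE] := phi_cm; rewrite -lee_fin phiE //.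
by apply: integral_ge0 => X _; rewrite lee_fin expR_ge0.
Qed.

Lemma cm_integral_etr_finite (mu : {measure set smx R q -> \bar R}) :
  (forall T, pd T -> (phi T)%:E = \int[mu]_(X in psd_set R q) (etr (- (T *m X)))%:E) ->
  \int[mu]_(X in psd_set R q) (etr (- X))%:E < +oo.
Proof.
move=> phiE; rewrite (eq_integral (fun X : smx R q => (etr (- (1%:M *m X)))%:E)).
  by rewrite -phiE ?ltry //; exact: pd1.
by move=> X _; rewrite mul1mx.
Qed.

Lemma measurable_cm_comp d (Om : measurableType d) (Z : Om -> smx R q) :
  measurable_fun setT Z -> (forall w, pd (Z w)) -> measurable_fun setT (fun w => phi (Z w)).
Proof.
move=> mZ pdZ; have [mu phiE] := phi_cm; apply/measurable_EFinP.
rewrite (_ : _ \o _ = fun w => \int[mu]_(X in psd_set R q) (etr (- (Z w *m X)))%:E).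
  exact: (measurable_integral_etr (cm_integral_etr_finite phiE) mZ).
by apply: boolp.funext => w; rewrite /= phiE.
Qed.

End CompletelyMonotone.

Section LaplaceKernel.
Variables (R : realType) (q : nat).

Definition etr_kernel (T : 'M[R]_q) : 'M[R]_q -> R := fun S => etr (- (T *m S)).

Lemma etrN_mulC (A B : 'M[R]_q) : etr (- (A *m B)) = etr (- (B *m A)).
Proof. by rewrite /etr !linearN /= mxtrace_mulC. Qed.

Lemma etr_kernel_cm T : psd T -> mx_completely_monotone (etr_kernel T).
Proof.
move=> pT; exists (@dirac _ (smx R q) T R) => S _.
rewrite integral_dirac; first by rewrite diracE mem_set // mul1e etrN_mulC.
- exact: measurable_psd.
- apply/measurable_EFinP/measurable_funTS; exact: measurable_etrN_mull.
Qed.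

Lemma etr_kernel_ge0 T S : (0 <= etr_kernel T S)%R.
Proof. exact: expR_ge0. Qed.

Lemma etr_kernel_le1 T S : psd T -> psd S -> (etr_kernel T S <= 1)%R.
Proof.
move=> pT pS; rewrite /etr_kernel /etr expR_le1 linearN /= oppr_le0.
exact: mxtrace_mul_psd_ge0.
Qed.

End LaplaceKernel.

Lemma ge0_le_integral_nonmeasurable (R : realType) d (T : measurableType d)
    (mu : {measure set T -> \bar R}) (D : set T) (f1 f2 : T -> \bar R) :
  (forall x, D x -> 0 <= f1 x)%E -> (forall x, D x -> f1 x <= f2 x)%E ->
  (\int[mu]_(x in D) f1 x <= \int[mu]_(x in D) f2 x)%E.
Proof.
move=> f10 f12; rewrite !ge0_integralE //; last first.
  by move=> x Dx; apply: le_trans (f10 _ Dx) (f12 _ Dx).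
apply: ereal_sup_le => _ [h /= hf1 <-]; exists h => //= x.
apply: le_trans (hf1 x) _; rewrite !patchE; case: ifPn => // /set_mem Dx.
exact: f12.
Qed.

Section LaplaceOrder.
Variables (R : realType) (n : nat) (q : 'I_n -> nat).
Local Open Scope ereal_scope.

Definition expect_prod d (Om : measurableType d) (P : {measure set Om -> \bar R})
    (Z : forall i, Om -> smx R (q i)) (psi : forall i, 'M[R]_(q i) -> R) :=
  \int[P]_w (\prod_(i < n) psi i (Z i w))%:E.

Definition cm_prefix k (psi : forall i, 'M[R]_(q i) -> R) :=
  (forall i : 'I_n, (i < k)%N -> mx_completely_monotone (psi i)) /\
  (forall i : 'I_n, (k <= i)%N -> exists2 T, psd T & psi i = etr_kernel T).

Lemma cm_prefix_ge0 k psi : cm_prefix k psi -> forall i S, pd S -> (0 <= psi i S)%R.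
Proof.
move=> [cm etrk] i S pS; have [ik|ki] := ltnP i k; first exact: cm_ge0 (cm i ik) _ pS.
by have [T _ ->] := etrk i ki; apply: etr_kernel_ge0.
Qed.

Lemma measurable_cm_prefix k psi d (Om : measurableType d)
    (Z : forall i, Om -> smx R (q i)) i :
  cm_prefix k psi -> measurable_fun setT (Z i) -> (forall w, pd (Z i w)) ->
  measurable_fun setT (fun w => psi i (Z i w)).
Proof.
move=> [cm etrk] mZ pdZ; have [ik|ki] := ltnP i k.
  exact: (measurable_cm_comp (cm i ik) mZ pdZ).
have [T _ ->] := etrk i ki; apply: measurable_etrN; apply: entrywise_measurable_mul.
  exact: entrywise_measurable_cst.
exact: measurable_entrywise.
Qed.

Lemma cm_prefix_set k (kn : (k < n)%N) psi (T : 'M[R]_(q (Ordinal kn))) :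
  cm_prefix k.+1 psi -> psd T -> cm_prefix k (dfwith psi (Ordinal kn) (etr_kernel T)).
Proof.
move=> [cm etrk] pT; split=> i ki.
  rewrite dfwithout; first exact: cm i (ltnW ki).
  by apply: contraTneq ki => <-; rewrite ltnn.
have [<-|ni] := eqVneq (Ordinal kn) i; first by rewrite dfwithin; exists T.
rewrite dfwithout //; apply: etrk; rewrite ltn_neqAle ki andbT.
by apply: contra_neq ni => ik; apply: val_inj.
Qed.

Lemma expect_prod_cm_integral d (Om : measurableType d)
    (P : {sigma_finite_measure set Om -> \bar R})
    (Z : forall i, Om -> smx R (q i)) (psi : forall i, 'M[R]_(q i) -> R) (j : 'I_n)
    (mu : {measure set smx R (q j) -> \bar R}) :
  (forall i, i != j -> measurable_fun setT (fun w => psi i (Z i w))) ->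
  (forall i w, i != j -> (0 <= psi i (Z i w))%R) ->
  measurable_fun setT (Z j) -> (forall w, pd (Z j w)) ->
  (forall T, pd T ->
    (psi j T)%:E = \int[mu]_(X in psd_set R (q j)) (etr (- (T *m X)))%:E) ->
  expect_prod P Z psi =
  \int[mu]_(T in psd_set R (q j)) expect_prod P Z (dfwith psi j (etr_kernel T)).
Proof.
move=> mpsi psi0 mZ pdZ psijE; have mu_fin := cm_integral_etr_finite psijE.
pose g w := (\prod_(i < n | i != j) psi i (Z i w))%R.
have mg : measurable_fun setT g.
  have -> : g = fun w =>
      (\prod_(i <- index_enum 'I_n) (if i != j then psi i (Z i w) else 1))%R.
    by apply/funext => w; rewrite /g big_mkcond.
  apply: measurable_prod => i _; case: (boolP (i != j)) => ij; first exact: mpsi.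
  exact: measurable_cst.
have g0 w : (0 <= g w)%R by apply: prodr_ge0 => i; apply: psi0.
transitivity (\int[P]_w \int[mu]_(X in psd_set R (q j)) (g w * etr (- (Z j w *m X)))%:E).
  apply: eq_integral => w _; rewrite /expect_prod (bigD1 j) //= mulrC EFinM psijE //.
  rewrite -ge0_integralZl_EFin //; first exact: measurable_psd.
  - by move=> X _; rewrite lee_fin expR_ge0.
  - apply/measurable_EFinP/measurable_funTS; exact: measurable_etrN_mull.
  - exact: g0.
rewrite (fubini_integral_etr mu_fin mZ P mg g0).
apply: eq_integral => T _; apply: eq_integral => w _.
rewrite (bigD1 j) //= dfwithin mulrC /etr_kernel etrN_mulC; congr (_ * _)%:E.
by apply: eq_bigr => i ni; rewrite dfwithout // eq_sym.
Qed.

Lemma expect_prod_le_cm_prefix d (Om : measurableType d)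
    (P : {sigma_finite_measure set Om -> \bar R})
    d' (Om' : measurableType d') (P' : {sigma_finite_measure set Om' -> \bar R})
    (X : forall i, Om -> smx R (q i)) (Y : forall i, Om' -> smx R (q i)) :
  (forall i, measurable_fun setT (X i)) -> (forall i, measurable_fun setT (Y i)) ->
  (forall i w, pd (X i w)) -> (forall i w, pd (Y i w)) ->
  (forall T : forall i, 'M[R]_(q i), (forall i, psd (T i)) ->
     expect_prod P' Y (fun i => etr_kernel (T i)) <=
     expect_prod P X (fun i => etr_kernel (T i))) ->
  forall k psi, (k <= n)%N -> cm_prefix k psi -> expect_prod P' Y psi <= expect_prod P X psi.
Proof.
move=> mX mY pdX pdY etr_le; elim=> [psi _ [_ etrk]|k IH psi kn psik].
  pose T i := s2val (cid2 (etrk i (leq0n i))).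
  have -> : psi = fun i => etr_kernel (T i).
    by apply: functional_extensionality_dep => i; rewrite /T; case: cid2.
  by apply: etr_le => i; rewrite /T; case: cid2.
set j := Ordinal kn; have [mu psijE] := psik.1 j (ltnSn k).
rewrite (expect_prod_cm_integral P (fun i _ => measurable_cm_prefix psik (mX i) (pdX i))
    (fun i w _ => cm_prefix_ge0 psik (i := i) (pdX i w)) (mX j) (pdX j) psijE).
rewrite (expect_prod_cm_integral P' (fun i _ => measurable_cm_prefix psik (mY i) (pdY i))
    (fun i w _ => cm_prefix_ge0 psik (i := i) (pdY i w)) (mY j) (pdY j) psijE).
apply: ge0_le_integral_nonmeasurable => T pT.
  apply: integral_ge0 => w _; rewrite lee_fin; apply: prodr_ge0 => i _.
  exact: (cm_prefix_ge0 (cm_prefix_set psik pT) (pdY i w)).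
exact: (IH _ (ltnW kn) (cm_prefix_set psik pT)).
Qed.

End LaplaceOrder.

Lemma expect_prod_etr_kernel_lty (R : realType) d (Om : measurableType d)
    (P : probability Om R) n (q : 'I_n -> nat) (Z : forall i, Om -> smx R (q i))
    (T : forall i, 'M[R]_(q i)) :
  (forall i, psd (T i)) -> (forall i w, pd (Z i w)) ->
  (expect_prod P Z (fun i => etr_kernel (T i)) < +oo)%E.
Proof.
move=> pT pdZ; apply: (@le_lt_trans _ _ (\int[P]_w (cst 1%E) w)%E).
  apply: ge0_le_integral_nonmeasurable => w _; rewrite lee_fin.
    by apply: prodr_ge0 => i _; apply: etr_kernel_ge0.
  by apply: prodr_ile1 => i _; rewrite etr_kernel_ge0 etr_kernel_le1 //; apply: pd_psd.
by rewrite integral_cst // mul1e; move: (probability_setT P) => /= ->; exact: ltry.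
Qed.

Theorem proposition3p1 (R : realType)
    (d : measure_display) (Omega : measurableType d) (P : probability Omega R)
    (d' : measure_display) (Omega' : measurableType d') (P' : probability Omega' R)
    (n : nat) (q : 'I_n -> nat)
    (X : forall i : 'I_n, Omega -> smx R (q i))
    (Y : forall i : 'I_n, Omega' -> smx R (q i))
    (mX : forall i, random_mx (X i)) (mY : forall i, random_mx (Y i))
    (pdX : forall i w, pd (X i w)) (pdY : forall i w, pd (Y i w)) :
  lt_order P P' X Y <->
  (forall phi : forall i : 'I_n, 'M[R]_(q i) -> R,
     (forall i, mx_completely_monotone (phi i)) ->
     (\int[P]_w (\prod_(i < n) phi i (X i w))%:E < +oo)%E ->
     (\int[P']_w (\prod_(i < n) phi i (Y i w))%:E < +oo)%E ->
     (\int[P']_w (\prod_(i < n) phi i (Y i w))%:E <=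
      \int[P]_w (\prod_(i < n) phi i (X i w))%:E)%E).
Proof.
(* the integrands are nonnegative, so (=>) needs no integrability hypothesis *)
split=> [lt_XY phi phi_cm _ _ | cm_le T pT].
  apply: (expect_prod_le_cm_prefix mX mY pdX pdY lt_XY (leqnn n)).
  by split=> [i _ | i]; [exact: phi_cm | rewrite leqNgt ltn_ord].
apply: cm_le (fun i => etr_kernel_cm (pT i)) _ _.
- exact: expect_prod_etr_kernel_lty pT pdX.
- exact: expect_prod_etr_kernel_lty pT pdY.
Qed.
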